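(* For terms $\Gamma\vdash s,t:X$ of the language $\mathbf{PSL}$, $s\approx_{\mathbf{PSL}}t$ if and only if $[\![s]\!]\propto[\![t]\!]$, i.e. there is $\lambda>0$ with $[\![s]\!](y|\gamma)=\lambda[\![t]\!](y|\gamma)$ for all $\gamma,y$. That is, $\mathrm{FinProjStoch}$ is fully abstract for $\mathbf{PSL}$.
   Context: $\mathbf{PSL}$ is the following first-order language. Types: $A::=X\mid\mathsf{unit}\mid A\ast A$ where $X$ ranges over finite sets. Terms: $t::=x\mid()\mid(t,t)\mid\pi_i t\mid \underline f(t)\mid\mathrm{let}\ x=t_1\ \mathrm{in}\ t_2$, where $\underline f:A\to B$ ranges over all subprobability kernels between the finite sets interpreting $A$ and $B$ (this includes exact conditioning $(=:=):X\times X\to D_{\le1}(1)$, $(x,y)\mapsto[x=y]$); typing is the usual one ($\Gamma\vdash \underline f(t):B$ if $\Gamma\vdash t:A$; let binds $x$ in $t_2$; $\pi_i$ projects from pairs). Types denote finite sets ($[\![\mathsf{unit}]\!]=\{*\}$, $[\![A\ast B]\!]=[\![A]\!]\times[\![B]\!]$, contexts by products), and a term $\Gamma\vdash t:A$ denotes a subprobability kernel $[\![t]\!](a|\gamma)$: $[\![x]\!](a|\gamma)=[a=\gamma_x]$; $[\![()]\!]( *|\gamma)=1$; $[\![(s,t)]\!]((a,b)|\gamma)=[\![s]\!](a|\gamma)[\![t]\!](b|\gamma)$; $[\![\pi_1t]\!](a|\gamma)=\sum_b[\![t]\!]((a,b)|\gamma)$ (similarly $\pi_2$); $[\![\underline f(t)]\!](b|\gamma)=\sum_a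 f(b|a)[\![t]\!](a|\gamma)$; $[\![\mathrm{let}\ x=s\ \mathrm{in}\ t]\!](b|\gamma)=\sum_a[\![s]\!](a|\gamma)[\![t]\!](b|\gamma,a)$. For a subdistribution $\varphi$ on a finite set, $\mathsf{normalize}(\varphi)=\varphi/Z$ with $Z=\sum_x\varphi(x)$ if $Z\neq0$, and $0$ otherwise. Closed programs $s,t$ are observationally equivalent, $s\approx t$, if $\mathsf{normalize}([\![s]\!])=\mathsf{normalize}([\![t]\!])$. Open terms $s,t$ are straight-line equivalent, $s\approx_{\mathbf{PSL}}t$, if $C[s]\approx C[t]$ for every closed well-typed $\mathbf{PSL}$ context $C[-]$ (a term with a hole, possibly binding the free variables of the hole). *)

From HB Require Import structures.
From mathcomp Require Import all_boot all_order all_algebra.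
From mathcomp Require Import reals.
Set Implicit Arguments. Unset Strict Implicit. Unset Printing Implicit Defensive.
Import Order.TTheory GRing.Theory Num.Theory.
Local Open Scope ring_scope.

Inductive ty : Type :=
| TFin : nat -> ty
| TUnit : ty
| TProd : ty -> ty -> ty.

Fixpoint den_ty (A : ty) : finType :=
  match A with
  | TFin n => 'I_n
  | TUnit => unit
  | TProd A B => (den_ty A * den_ty B)%type
  end.

(** Contexts as lists of types (de Bruijn; head = innermost binder). *)
Definition ctx := seq ty.

Fixpoint den_ctx (G : ctx) : finType :=
  match G with
  | [::] => unit
  | A :: G' => (den_ty A * den_ctx G')%type
  end.

Inductive var : ctx -> ty -> Type :=
| Vz G A : var (A :: G) A
| Vs G A B : var G A -> var (B :: G) A.

Fixpoint lookup G A (v : var G A) : den_ctx G -> den_ty A :=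
  match v in var G A return den_ctx G -> den_ty A with
  | Vz _ _ => fun g => g.1
  | Vs _ _ _ v' => fun g => lookup v' g.2
  end.

(** Subprobability kernels between finite sets: f(b|a) = kf a b. *)
Record kern (R : realType) (A B : finType) := Kern {
  kf : A -> B -> R;
  kf_ge0 : forall a b, 0 <= kf a b;
  kf_sub : forall a, \sum_b kf a b <= 1 }.

Inductive tm (R : realType) : ctx -> ty -> Type :=
| Var G A : var G A -> tm R G A
| Unit G : tm R G TUnit
| Pair G A B : tm R G A -> tm R G B -> tm R G (TProd A B)
| Fst G A B : tm R G (TProd A B) -> tm R G A
| Snd G A B : tm R G (TProd A B) -> tm R G B
| App G A B : kern R (den_ty A) (den_ty B) -> tm R G A -> tm R G B
| Let G A B : tm R G A -> tm R (A :: G) B -> tm R G B.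

(** Denotation [[t]](a | gamma) = den t gamma a. *)
Fixpoint den (R : realType) G A (t : tm R G A) : den_ctx G -> den_ty A -> R :=
  match t in tm _ G A return den_ctx G -> den_ty A -> R with
  | Var _ _ v => fun g a => if a == lookup v g then 1 else 0
  | Unit _ => fun _ _ => 1
  | Pair _ _ _ s t => fun g ab => den s g ab.1 * den t g ab.2
  | Fst _ _ _ t => fun g a => \sum_b den t g (a, b)
  | Snd _ _ _ t => fun g b => \sum_a den t g (a, b)
  | App _ _ _ f t => fun g b => \sum_a kf f a b * den t g a
  | Let _ _ _ s t => fun g b => \sum_a den s g a * den t (a, g) b
  end.

Definition normalize (R : realType) (T : finType) (phi : T -> R) : T -> R :=
  let Z := \sum_x phi x in
  fun x => if Z != 0 then phi x / Z else 0.

Definition obs_equiv (R : realType) A (s t : tm R [::] A) : Prop :=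
  normalize (den s tt) = normalize (den t tt).

(** One-hole contexts C[-] with hole of type G |- _ : X; the context itself
    has type D |- C : B.  The hole sits at a point where the locally bound
    variables are exactly G (so C binds the free variables of the hole). *)
Inductive pctx (R : realType) (G : ctx) (X : ty) : ctx -> ty -> Type :=
| CHole : pctx R G X G X
| CPairL D A B : pctx R G X D A -> tm R D B -> pctx R G X D (TProd A B)
| CPairR D A B : tm R D A -> pctx R G X D B -> pctx R G X D (TProd A B)
| CFst D A B : pctx R G X D (TProd A B) -> pctx R G X D A
| CSnd D A B : pctx R G X D (TProd A B) -> pctx R G X D B
| CApp D A B : kern R (den_ty A) (den_ty B) -> pctx R G X D A -> pctx R G X D B
| CLetL D A B : pctx R G X D A -> tm R (A :: D) B -> pctx R G X D B
| CLetR D A B : tm R D A -> pctx R G X (A :: D) B -> pctx R G X D B.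

Fixpoint plug (R : realType) G X D B (C : pctx R G X D B) (s : tm R G X)
  : tm R D B :=
  match C in pctx _ _ _ D B return tm R D B with
  | CHole => s
  | CPairL _ _ _ C' t => Pair (plug C' s) t
  | CPairR _ _ _ t C' => Pair t (plug C' s)
  | CFst _ _ _ C' => Fst (plug C' s)
  | CSnd _ _ _ C' => Snd (plug C' s)
  | CApp _ _ _ f C' => App f (plug C' s)
  | CLetL _ _ _ C' t => Let (plug C' s) t
  | CLetR _ _ _ t C' => Let t (plug C' s)
  end.

Definition psl_equiv (R : realType) G X (s t : tm R G X) : Prop :=
  forall B (C : pctx R G X [::] B), obs_equiv (plug C s) (plug C t).

Definition proportional (R : realType) G X (s t : tm R G X) : Prop :=
  exists lam : R, 0 < lam /\ forall g y, den s g y = lam * den t g y.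

From mathcomp Require Import all_boot all_order all_algebra reals.
From Stdlib Require Import FunctionalExtensionality.
Set Implicit Arguments. Unset Strict Implicit. Unset Printing Implicit Defensive.
Import Order.TTheory GRing.Theory Num.Theory.
Local Open Scope ring_scope.

(* Every term constructor, and hence every context, acts linearly on the
   denotation of the hole, so proportional denotations stay proportional after
   plugging, and normalization forgets positive scalars.  Conversely, the
   context that draws each free variable uniformly at random, runs the hole and
   returns its result paired with the tuple of all variables assigns to
   (y, gamma) the weight w(gamma) [[s]](y|gamma), with w(gamma) > 0.  Equal
   normalizations of nonnegative weights are proportional, and dividing out w
   gives the scalar. *)

Lemma sum_unit (R : realType) (F : unit -> R) : \sum_(x : unit) F x = F tt.
Proof. by rewrite (big_pred1 tt) //; case. Qed.

Lemma den_ge0 (R : realType) G A (t : tm R G A) g a : 0 <= den t g a.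
Proof.
elim: t g a => /= [? ? v g a | * | ? ? ? ? IHs ? IHt g a | ? ? ? ? IH g a
  | ? ? ? ? IH g a | ? ? ? f ? IH g a | ? ? ? ? IHs ? IHt g a].
- by case: ifP.
- exact: ler01.
- exact: mulr_ge0.
- exact: sumr_ge0.
- exact: sumr_ge0.
- by apply: sumr_ge0 => *; rewrite mulr_ge0 ?kf_ge0.
- by apply: sumr_ge0 => *; rewrite mulr_ge0.
Qed.

Section Normalize.
Variables (R : realType) (T : finType).
Implicit Types (phi psi : T -> R).

Lemma sum_normalize phi : \sum_x normalize phi x = (\sum_x phi x != 0)%:R.
Proof.
rewrite /normalize; case: eqP => [_ | /eqP Z]; first by rewrite big1.
by rewrite -mulr_suml divff.
Qed.

Lemma normalize_scale phi psi lam :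
  0 < lam -> (forall x, phi x = lam * psi x) -> normalize phi = normalize psi.
Proof.
move=> lam_gt0 phiE; apply: functional_extensionality => x; rewrite /normalize.
have -> : \sum_x phi x = lam * \sum_x psi x by rewrite mulr_sumr; exact: eq_bigr.
rewrite mulf_eq0 gt_eqF //= phiE; case: ifP => // _.
by rewrite invfM mulrACA divff ?gt_eqF // mul1r.
Qed.

Lemma normalize_proportional phi psi :
  (forall x, 0 <= phi x) -> (forall x, 0 <= psi x) ->
  normalize phi = normalize psi ->
  exists2 lam, 0 < lam & forall x, phi x = lam * psi x.
Proof.
move=> phi_ge0 psi_ge0 Nphi_psi.
have sum_neq0E : (\sum_x phi x != 0) = (\sum_x psi x != 0).
  move: (sum_normalize phi); rewrite Nphi_psi sum_normalize.
  by move=> /eqP; rewrite eqr_nat; do 2!case: (_ != 0).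
have [Zpsi | Zpsi] := eqVneq (\sum_x psi x) 0.
  move: sum_neq0E; rewrite Zpsi eqxx => /negbFE /eqP Zphi.
  exists 1 => // x; rewrite mul1r (psumr_eq0P (fun i _ => phi_ge0 i) Zphi) //.
  by rewrite (psumr_eq0P (fun i _ => psi_ge0 i) Zpsi).
have Zphi : \sum_x phi x != 0 by rewrite sum_neq0E.
exists ((\sum_x phi x) / (\sum_x psi x)).
  by rewrite divr_gt0 // lt0r ?Zphi ?Zpsi sumr_ge0.
move=> x; have := congr1 (fun f => f x) Nphi_psi; rewrite /normalize Zphi Zpsi.
by move=> /= E; rewrite mulrAC -mulrA -E mulrCA divff // mulr1.
Qed.

End Normalize.

Lemma den_plug_scale (R : realType) G X (s t : tm R G X) (lam : R) :
  (forall g y, den s g y = lam * den t g y) ->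
  forall D B (C : pctx R G X D B) g b,
    den (plug C s) g b = lam * den (plug C t) g b.
Proof.
move=> Hst D B C; elim: C => /= [| ? ? ? ? IH ? g b | ? ? ? ? ? IH g b
  | ? ? ? ? IH g b | ? ? ? ? IH g b | ? ? ? f ? IH g b | ? ? ? ? IH ? g b
  | ? ? ? ? ? IH g b].
- exact: Hst.
- by rewrite IH mulrA.
- by rewrite IH mulrCA.
- by rewrite mulr_sumr; apply: eq_bigr => *; rewrite IH.
- by rewrite mulr_sumr; apply: eq_bigr => *; rewrite IH.
- by rewrite mulr_sumr; apply: eq_bigr => *; rewrite IH mulrCA.
- by rewrite mulr_sumr; apply: eq_bigr => *; rewrite IH mulrA.
- by rewrite mulr_sumr; apply: eq_bigr => *; rewrite IH mulrCA.
Qed.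

Lemma proportional_psl_equiv (R : realType) G X (s t : tm R G X) :
  proportional s t -> psl_equiv s t.
Proof.
move=> [lam [lam_gt0 Hst]] B C.
exact: normalize_scale lam_gt0 (den_plug_scale Hst C tt).
Qed.

Fixpoint env_ty (E : ctx) : ty :=
  if E is A :: E' then TProd A (env_ty E') else TUnit.

Fixpoint env_tuple (R : realType) (E : ctx) :
  forall D, (forall A, var E A -> var D A) -> tm R D (env_ty E) :=
  match E return forall D, (forall A, var E A -> var D A) -> tm R D (env_ty E) with
  | [::] => fun D _ => Unit R D
  | A :: E' => fun D f =>
      Pair (Var R (f A (Vz E' A))) (@env_tuple R E' D (fun B v => f B (Vs A v)))
  end.

Fixpoint encode_with (E : ctx) :
  (forall A, var E A -> den_ty A) -> den_ty (env_ty E) :=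
  match E return (forall A, var E A -> den_ty A) -> den_ty (env_ty E) with
  | [::] => fun _ => tt
  | A :: E' => fun h => (h A (Vz E' A), @encode_with E' (fun B v => h B (Vs A v)))
  end.

Definition encode_env (E : ctx) (g : den_ctx E) : den_ty (env_ty E) :=
  encode_with (fun A x => lookup x g).

Lemma encode_env_inj E : injective (@encode_env E).
Proof.
elim: E => [|A E IH] /=; first by do 2!case.
by case=> a1 g1 [a2 g2] [-> /IH ->].
Qed.

Lemma den_env_tuple (R : realType) E D (f : forall A, var E A -> var D A) g v :
  den (env_tuple R f) g v =
  (v == encode_with (fun A x => lookup (f A x) g))%:R.
Proof.
elim: E D f g v => [|A E IH] D f g v /=; first by case: v.
case: v => v1 v2; rewrite IH xpair_eqE.
by case: (v1 == _); case: (v2 == _); rewrite ?mulr1 ?mulr0.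
Qed.

Definition uniform_kern (R : realType) (T : finType) : kern R unit T.
Proof.
refine (@Kern R unit T (fun _ _ => #|T|%:R^-1) _ _) => [_ _ | _].
- by rewrite invr_ge0 ler0n.
- rewrite sumr_const (_ : #|xpredT| = #|T|) //.
  have [-> | T_neq0] := eqVneq #|T| 0%N; first by rewrite mulr0n ler01.
  by rewrite -[_ *+ #|T|]mulr_natr mulVf ?pnatr_eq0.
Defined.

Fixpoint uniform_weight (R : realType) (E : ctx) : den_ctx E -> R :=
  match E return den_ctx E -> R with
  | [::] => fun _ => 1
  | A :: E' => fun g => #|den_ty A|%:R^-1 * @uniform_weight R E' g.2
  end.

Lemma uniform_weight_gt0 (R : realType) E (g : den_ctx E) :
  0 < uniform_weight R g.
Proof.
elim: E g => [|A E IH] g /=; first exact: ltr01.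
by rewrite mulr_gt0 // invr_gt0 ltr0n; apply/card_gt0P; exists g.1.
Qed.

Fixpoint bind_uniform (R : realType) G X B (E : ctx) :
  pctx R G X E B -> pctx R G X [::] B :=
  match E return pctx R G X E B -> pctx R G X [::] B with
  | [::] => fun C => C
  | A :: E' => fun C =>
      @bind_uniform R G X B E'
        (CLetR (@App R E' TUnit A (uniform_kern R (den_ty A)) (Unit R E')) C)
  end.

Lemma den_bind_uniform (R : realType) G X B (s : tm R G X) E
    (C : pctx R G X E B) b :
  den (plug (bind_uniform C) s) tt b =
  \sum_(g : den_ctx E) uniform_weight R g * den (plug C s) g b.
Proof.
elim: E C => [|A E IH] C /=; first by rewrite sum_unit mul1r.
rewrite IH (eq_bigr (fun g : den_ctx E => \sum_(a : den_ty A)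
    uniform_weight R ((a, g) : den_ctx (A :: E)) * den (plug C s) (a, g) b))
  => [|g _]; last first.
  rewrite /= mulr_sumr; apply: eq_bigr => a _.
  by rewrite sum_unit mulr1 mulrA [_ * uniform_weight _ _]mulrC.
by rewrite exchange_big pair_bigA; apply: eq_bigr; case.
Qed.

Definition probe_body (R : realType) G X :
  pctx R G X G (TProd X (env_ty G)) :=
  CLetL (CHole R G X) (Pair (Var R (Vz G X)) (env_tuple R (fun A x => Vs X x))).

Definition probe_ctx (R : realType) G X :
  pctx R G X [::] (TProd X (env_ty G)) :=
  bind_uniform (probe_body R G X).

Lemma den_probe_body (R : realType) G X (s : tm R G X) y g g' :
  den (plug (probe_body R G X) s) g' (y, encode_env g) =
  den s g' y * (encode_env g == encode_env g')%:R.
Proof.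
rewrite /= (bigD1 y) //= big1 ?addr0 => [|y' y'_neq_y].
  (* [lookup (Vs x) (y, g')] reduces to [lookup x g'], so the encoding computed
     by [den_env_tuple] is [encode_env g'] up to conversion. *)
  by rewrite den_env_tuple eqxx mul1r.
by rewrite eq_sym (negbTE y'_neq_y) mul0r mulr0.
Qed.

Lemma den_probe_ctx (R : realType) G X (s : tm R G X) y g :
  den (plug (probe_ctx R G X) s) tt (y, encode_env g) =
  uniform_weight R g * den s g y.
Proof.
rewrite den_bind_uniform; under eq_bigr do rewrite den_probe_body.
rewrite (bigD1 g) //= big1 ?addr0 => [|g' g'_neq_g]; first by rewrite eqxx mulr1.
case: eqP => [/encode_env_inj g_eq | _].
  by rewrite g_eq eqxx in g'_neq_g.
by rewrite !mulr0.
Qed.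

Lemma psl_equiv_proportional (R : realType) G X (s t : tm R G X) :
  psl_equiv s t -> proportional s t.
Proof.
move=> st_equiv.
have [lam lam_gt0 Hst] := normalize_proportional (fun x => den_ge0 _ _ x)
  (fun x => den_ge0 _ _ x) (st_equiv _ (probe_ctx R G X)).
exists lam; split => // g y.
apply: (mulfI (lt0r_neq0 (uniform_weight_gt0 R g))).
by rewrite mulrCA -!den_probe_ctx Hst.
Qed.

Theorem proposition6p11 (R : realType) (G : ctx) (n : nat)
    (s t : tm R G (TFin n)) :
  psl_equiv s t <-> proportional s t.
Proof.
split; [exact: psl_equiv_proportional | exact: proportional_psl_equiv].
Qed.
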